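(* Let $f:\mathbb{R}^n\to\mathbb{R}$ be $r+1$ times continuously differentiable for some integer $r\ge1$, with $\nabla f$ Lipschitz continuous with constant $L$. Let $x^*$ satisfy $\nabla f(x^* )=0$, and write $\nabla^2 f(x^* )=\sum_{i=1}^n\lambda_i v_iv_i^T$ with $\{v_1,\dots,v_n\}$ orthonormal and \[ \lambda_1\ge\dots\ge\lambda_{n-p}\ge 0>\lambda_{n-p+1}\ge\dots\ge\lambda_n \] for some $1\le p<n$; suppose $\lambda_1>0$. Let $0<\alpha<4/\lambda_1$ and $\beta\in(\max(-1+\alpha\lambda_1/2,0),1)$, let \[ DG(x^*,x^* )=\begin{bmatrix}(1+\beta)I-\alpha\nabla^2 f(x^* ) & -\beta I\\ I & 0\end{bmatrix}\in\mathbb{R}^{2n\times 2n}, \] and let $E_{cs}\subseteq\mathbb{R}^{2n}$ be the invariant subspace of $DG(x^*,x^* )$ corresponding to its eigenvalues of magnitude less than or equal to $1$. Then for $w\in\mathbb{R}^n$, the vector $(w,w)\in\mathbb{R}^{2n}$ lies in $E_{cs}$ only if $w\in\operatorname{span}\{v_1,\dots,v_{n-p}\}$, i.e. the span of the eigenvectors of $\nabla^2 f(x^* )$ corresponding to its nonnegative eigenvalues.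
   Context: $DG(x^*,x^* )$ is the Jacobian at $(x^*,x^* )$ of the heavy-ball map $G(z_1,z_2)=(z_1-\alpha\nabla f(z_1)+\beta(z_1-z_2),\,z_1)$. $E_{cs}$ is the sum of the (generalized, real) eigenspaces of $DG(x^*,x^* )$ for eigenvalues of complex modulus at most $1$. *)

From HB Require Import structures.
From mathcomp Require Import all_boot all_order all_algebra.
From mathcomp Require Import all_classical all_reals all_analysis.
From mathcomp Require Import complex.
Set Implicit Arguments. Unset Strict Implicit. Unset Printing Implicit Defensive.
Import Order.TTheory GRing.Theory Num.Theory.
Import numFieldNormedType.Exports.
Local Open Scope ring_scope.

Definition basis_vec (R : realType) (n : nat) (i : 'I_n) : 'cV[R]_n := delta_mx i 0.
Arguments basis_vec R {n} i.

Definition partial (R : realType) (n : nat) (i : 'I_n) (f : 'cV[R]_n -> R)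
  : 'cV[R]_n -> R := fun x => derive f x (basis_vec R i).

Fixpoint Ck (R : realType) (n : nat) (k : nat) (f : 'cV[R]_n -> R) : Prop :=
  continuous f /\
  match k with
  | 0 => True
  | k'.+1 => forall i : 'I_n,
      (forall x, derivable f x (basis_vec R i)) /\ Ck k' (partial i f)
  end.

Definition gradient (R : realType) (n : nat) (f : 'cV[R]_n -> R) (x : 'cV[R]_n)
  : 'cV[R]_n := \col_i partial i f x.

Definition hessian (R : realType) (n : nat) (f : 'cV[R]_n -> R) (x : 'cV[R]_n)
  : 'M[R]_n := \matrix_(i, j) partial j (partial i f) x.

Definition enorm (R : realType) (n : nat) (x : 'cV[R]_n) : R :=
  Num.sqrt (\sum_i x i 0 ^+ 2).

Definition lipschitz_with (R : realType) (n : nat) (g : 'cV[R]_n -> 'cV[R]_n) (L : R) :=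
  forall x y, enorm (g x - g y) <= L * enorm (x - y).

Definition heavy_ball_jacobian (R : realType) (n : nat) (H : 'M[R]_n) (alpha beta : R)
  : 'M[R]_(n + n) :=
  block_mx ((1 + beta)%:M - alpha *: H) (- beta%:M) 1%:M 0.

(* E_cs: the real invariant subspace of A equal to the sum of the (real) generalized
   eigenspaces for eigenvalues of complex modulus <= 1.  Concretely: the real vectors
   that are sums of complex generalized eigenvectors of A for eigenvalues mu with |mu| <= 1. *)
Definition E_cs (R : realType) (m : nat) (A : 'M[R]_m) : set 'cV[R]_m :=
  [set z | exists (k : nat) (mu : 'I_k -> R[i]) (w : 'I_k -> 'cV[R[i]]_m),
     (forall j, Normc.normc (mu j) <= 1) /\
     (forall j, (map_mx (fun a => a%:C%C) A - (mu j)%:M) ^+ m *m w j = 0) /\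
     map_mx (fun a => a%:C%C) z = \sum_j w j].

(** For every negative eigenvalue [l] of the Hessian, with unit eigenvector [u],
    the quadratic [m^2 = (1 + beta - alpha l) m - beta] has a real root
    [m > 1], and
    [(m u^T, -beta u^T)] is a left eigenvector of [DG] for [m].  A left
    eigenvector for an eigenvalue [m] annihilates every generalized
    eigenvector for an eigenvalue other than [m], hence all of [E_cs].
    Applied to [(w, w)] this gives [(m - beta) u^T w = 0], and [m > 1 > beta]
    forces [u^T w = 0]; expanding [w] in the orthonormal basis [v] leaves only
    the components along eigenvectors of nonnegative eigenvalues. *)

From HB Require Import structures.
From mathcomp Require Import all_boot all_order all_algebra.
From mathcomp Require Import all_classical all_reals all_analysis.
From mathcomp Require Import complex.
From mathcomp Require Import ring lra.
Import Order.TTheory GRing.Theory Num.Theory.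
Import numFieldNormedType.Exports.
Set Implicit Arguments. Unset Strict Implicit. Unset Printing Implicit Defensive.
Local Open Scope ring_scope.

Lemma quadratic_root_gt1 (R : rcfType) (a b : R) :
  1 + b < a -> exists2 m : R, 1 < m & m ^+ 2 = a * m - b.
Proof.
move=> hab.
have disc_ge0 : 0 <= a ^+ 2 - 4 * b.
  have : 0 <= (1 - b) ^+ 2 by apply: sqr_ge0.
  rewrite !expr2; nra.
set s := Num.sqrt (a ^+ 2 - 4 * b).
have s_sqr : s ^+ 2 = a ^+ 2 - 4 * b by rewrite sqr_sqrtr.
have s_ge0 : 0 <= s by rewrite sqrtr_ge0.
exists ((a + s) / 2); last first.
  apply: (@subr0_eq _ _ (a * ((a + s) / 2) - b)).
  have -> : ((a + s) / 2) ^+ 2 - (a * ((a + s) / 2) - b)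
            = (s ^+ 2 - (a ^+ 2 - 4 * b)) / 4 by field.
  by rewrite s_sqr subrr mul0r.
rewrite ltr_pdivlMr // mul1r.
have [a_gt2|a_le2] := ltrP 2 a; first by lra.
suff : 2 - a < s by lra.
rewrite -(@ltr_pXn2r _ 2) ?nnegrE //; last by lra.
by rewrite s_sqr !expr2; nra.
Qed.

Section LeftEigenvector.
Variables (F : fieldType) (m : nat) (A : 'M[F]_m) (psi : 'rV[F]_m) (a : F).
Hypothesis psi_eigen : psi *m A = a *: psi.

Lemma mulmx_left_eigen_subX (b : F) (k : nat) :
  psi *m (A - b%:M) ^+ k = (a - b) ^+ k *: psi.
Proof.
elim: k => [|k IHk]; first by rewrite !expr0 scale1r mulmx1.
rewrite exprSr -mulmxE mulmxA IHk -scalemxAl mulmxBr psi_eigen mul_mx_scalar.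
by rewrite -scalerBl scalerA -exprSr.
Qed.

Lemma left_eigen_mulmx_gen_eigen (b : F) (k : nat) (w : 'cV[F]_m) :
  a != b -> (A - b%:M) ^+ k *m w = 0 -> psi *m w = 0.
Proof.
move=> ab /(congr1 (mulmx psi)); rewrite mulmx0 mulmxA mulmx_left_eigen_subX.
rewrite -scalemxAl => /eqP; rewrite scaler_eq0 expf_eq0 subr_eq0 (negPf ab).
by rewrite andbF => /eqP.
Qed.

End LeftEigenvector.

Lemma normc_real (R : rcfType) (x : R) : Normc.normc x%:C%C = `|x|.
Proof. by rewrite /Normc.normc /= expr0n addr0 sqrtr_sqr. Qed.

Lemma E_cs_left_eigen_gt1 (R : realType) (m : nat) (A : 'M[R]_m)
    (psi : 'rV[R]_m) (a : R) (z : 'cV[R]_m) :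
  psi *m A = a *: psi -> 1 < a -> E_cs A z -> psi *m z = 0.
Proof.
move=> psi_eigen a_gt1 [k [mu [w [mu_le1 [w_gen z_sum]]]]].
set C := real_complex R.
have w_genC j : (map_mx C A - (mu j)%:M) ^+ m *m w j = 0 := w_gen j.
have z_sumC : map_mx C z = \sum_j w j := z_sum.
have psiC_eigen : map_mx C psi *m map_mx C A = C a *: map_mx C psi.
  by rewrite -map_mxM psi_eigen map_mxZ.
have psiC_w j : map_mx C psi *m w j = 0.
  apply: (left_eigen_mulmx_gen_eigen psiC_eigen _ (w_genC j)).
  apply: contraTneq (mu_le1 j) => <-.
  by rewrite /C normc_real -ltNge (lt_le_trans a_gt1) ?ler_norm.
apply/eqP; rewrite -(map_mx_eq0 C) map_mxM.
by rewrite z_sumC mulmx_sumr big1.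
Qed.

Lemma heavy_ball_left_eigen (R : realType) (n : nat) (H : 'M[R]_n)
    (alpha beta l m : R) (u : 'cV[R]_n) :
  u^T *m H = l *: u^T -> m ^+ 2 = (1 + beta - alpha * l) * m - beta ->
  let psi := row_mx (m *: u^T) (- beta *: u^T) in
  psi *m heavy_ball_jacobian H alpha beta = m *: psi.
Proof.
move=> u_eigen m_root psi.
rewrite /psi /heavy_ball_jacobian mul_row_block scale_row_mx !mulmx0 addr0.
rewrite mulmxBr mulmxN -!scalemxAl -scalemxAr u_eigen !mul_mx_scalar !scalerA.
rewrite -scalerBl -scalerDl mulrN scaleNr.
by congr (row_mx (_ *: _) _); rewrite -expr2 m_root; ring.
Qed.

Lemma heavy_ball_E_cs_orthogonal (R : realType) (n : nat) (H : 'M[R]_n)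
    (alpha beta l : R) (u w : 'cV[R]_n) :
  u^T *m H = l *: u^T -> l < 0 -> 0 < alpha -> 0 < beta -> beta < 1 ->
  E_cs (heavy_ball_jacobian H alpha beta) (col_mx w w) -> u^T *m w = 0.
Proof.
move=> u_eigen l_lt0 alpha_gt0 beta_gt0 beta_lt1 w_cs.
have [m m_gt1 m_root] := @quadratic_root_gt1 R (1 + beta - alpha * l) beta
  ltac:(nra).
have := E_cs_left_eigen_gt1 (heavy_ball_left_eigen u_eigen m_root) m_gt1 w_cs.
rewrite mul_row_col -!scalemxAl -scalerDl => /eqP.
rewrite scaler_eq0 subr_eq0 => /orP [/eqP m_eq_beta|/eqP //].
by move: (lt_trans beta_lt1 m_gt1); rewrite m_eq_beta ltxx.
Qed.

Section OrthonormalBasis.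
Variables (F : fieldType) (n : nat) (v : 'I_n -> 'cV[F]_n).
Hypothesis v_orthonormal : forall i j, (v i)^T *m v j = (i == j)%:R%:M.

Lemma orthonormal_expansion (w : 'cV[F]_n) :
  w = \sum_k ((v k)^T *m w) 0 0 *: v k.
Proof.
pose V : 'M[F]_n := \matrix_(j, k) v k j 0.
have VtV : V^T *m V = 1%:M.
  apply/matrixP => i j.
  have := congr1 (fun M : 'M[F]_1 => M 0 0) (v_orthonormal i j).
  rewrite !mxE mulr1n => <-.
  by apply: eq_bigr => k _; rewrite !mxE.
have w_VVt : w = V *m (V^T *m w) by rewrite mulmxA (mulmx1C VtV) mul1mx.
rewrite {1}w_VVt.
apply/matrixP => i j; rewrite (ord1 j) summxE !mxE; apply: eq_bigr => k _.
rewrite !mxE mulrC; congr (_ * _); apply: eq_bigr => l _; by rewrite !mxE.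
Qed.

Lemma orthonormal_left_eigen (lam : 'I_n -> F) (i : 'I_n) :
  (v i)^T *m (\sum_j lam j *: (v j *m (v j)^T)) = lam i *: (v i)^T.
Proof.
rewrite mulmx_sumr (bigD1 i) //= big1 ?addr0 => [|j ji].
  by rewrite -scalemxAr mulmxA v_orthonormal eqxx mul_scalar_mx scale1r.
by rewrite -scalemxAr mulmxA v_orthonormal eq_sym (negPf ji) mul_scalar_mx
  !scale0r scaler0.
Qed.

End OrthonormalBasis.

Theorem theorem2p7 (R : realType) (n r p : nat) (f : 'cV[R]_n -> R) (L : R)
  (xstar : 'cV[R]_n) (lam : 'I_n -> R) (v : 'I_n -> 'cV[R]_n) (lam1 alpha beta : R) :
  (1 <= r)%N ->
  Ck r.+1 f ->
  lipschitz_with (gradient f) L ->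
  gradient f xstar = 0 ->
  (forall i j, (v i)^T *m v j = (i == j)%:R%:M) ->
  hessian f xstar = \sum_i lam i *: (v i *m (v i)^T) ->
  (1 <= p)%N -> (p < n)%N ->
  (forall i j : 'I_n, (i <= j)%N -> lam j <= lam i) ->
  (forall i : 'I_n, (i < n - p)%N -> 0 <= lam i) ->
  (forall i : 'I_n, (n - p <= i)%N -> lam i < 0) ->
  (forall i : 'I_n, val i = 0%N -> lam i = lam1) ->
  0 < lam1 ->
  0 < alpha -> alpha < 4 / lam1 ->
  0 < beta -> -1 + alpha * lam1 / 2 < beta -> beta < 1 ->
  forall w : 'cV[R]_n,
    E_cs (heavy_ball_jacobian (hessian f xstar) alpha beta) (col_mx w w) ->
    exists c : 'I_n -> R, w = \sum_(i : 'I_n | (i < n - p)%N) c i *: v i.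
Proof.
move=> _ _ _ _ v_orthonormal hessian_spectral _ _ _ _ lam_neg _ _
  alpha_gt0 _ beta_gt0 _ beta_lt1 w w_cs.
have v_eigen i : (v i)^T *m hessian f xstar = lam i *: (v i)^T.
  by rewrite hessian_spectral orthonormal_left_eigen.
exists (fun k => ((v k)^T *m w) 0 0).
rewrite {1}(orthonormal_expansion v_orthonormal w).
rewrite (bigID (fun i : 'I_n => (i < n - p)%N)) /= [X in _ + X]big1 ?addr0 //.
move=> i; rewrite -leqNgt => /lam_neg lam_i_neg.
by rewrite (heavy_ball_E_cs_orthogonal (v_eigen i) lam_i_neg alpha_gt0 beta_gt0
  beta_lt1 w_cs) mxE scale0r.
Qed.
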